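(* Let $N\ge 3$. For every sufficiently small $\varepsilon_0>0$ there exists $p_0>0$ such that for each $p\ge p_0$ one has $\tilde\eta \le 0$ on $[\zeta_1^*,\infty)$, where $\tilde\eta$ and $\zeta_1^*$ are defined in the context.
   Context: For $p>\frac{N+2}{N-2}$ let $\theta = \frac{2}{p-1}$, $A_{p,N} = [\theta(N-2-\theta)]^{\frac{1}{p-1}}$, $m = [\theta(N-2-\theta)]^{-1/2}$, $\alpha = m(N-2-2\theta)$, $\beta = \sqrt{|p-1-(\alpha/2)^2|}$, $D_p = \frac{m^2}{4m^2+2\alpha m + (p-1)}$, $f(\zeta) = D_p e^{-2m\zeta}$, $\phi(x) = -((1+x)^p-1-px)$. Let $U_p^*$ be the unique solution of $-u''-\frac{N-1}{r}u'+u=u^p$ on $(0,\infty)$, $u>0$, $\lim_{r\to0^+}r^\theta u(r) = A_{p,N}$. Define $\eta(\zeta) = A_{p,N}^{-1} r^\theta U_p^*(r) - 1$ where $r = e^{-m\zeta}$, $\zeta\in\mathbb{R}$, and $\tilde\eta = \eta - f$. Fix a constant $\tilde c\in(0,1)$ such that, for all sufficiently large $p$, $P_N < \frac12\frac{1-e^{-(\alpha+8m)\pi/(2\beta)}}{1+e^{-(\alpha+8m)\pi/(2\beta)}}$ if $N<10$ and $P_N<\frac12$ if $N\ge10$ (such $\tilde c$ exists), where $\tilde\zeta_p$ is defined by $e^{-m\tilde\zeta_p} = \tilde c/\sqrt p$ and $P_N := \frac{|\phi(f(\tilde\zeta_p))|}{f(\tilde\zeta_p)}\cdot\frac{4}{(\alpha+8m)^2+4\beta^2}(1+e^{-\frac{(\alpha+8m)\pi}{2\beta}})$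 if $N<10$, $P_N := \frac{|\phi(f(\tilde\zeta_p))|}{f(\tilde\zeta_p)}\cdot\frac{1}{2\beta(\alpha/2+4m-\beta)}$ if $N\ge10$. For $\varepsilon_0>0$, $$\zeta_1^* := \inf\{\zeta\ge\tilde\zeta_p : |\tilde\eta(z)|\le(1+\varepsilon_0)P_N f(z)\text{ for all } z\ge\zeta\}.$$ *)

From Stdlib Require Import Reals.
From Coquelicot Require Import Coquelicot.
Open Scope R_scope.

Section Defs.
Variables (N : nat) (p : R).

Definition theta : R := 2 / (p - 1).
Definition kappa : R := theta * (INR N - 2 - theta).
Definition A_pN : R := Rpower kappa (1 / (p - 1)).
Definition m_p : R := / sqrt kappa.
Definition alpha_p : R := m_p * (INR N - 2 - 2 * theta).
Definition beta_p : R := sqrt (Rabs (p - 1 - (alpha_p / 2) ^ 2)).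
Definition D_p : R := m_p ^ 2 / (4 * m_p ^ 2 + 2 * alpha_p * m_p + (p - 1)).
Definition f_p (z : R) : R := D_p * exp (- 2 * m_p * z).
Definition phi_p (x : R) : R := - (Rpower (1 + x) p - 1 - p * x).

Definition is_Ustar (U : R -> R) : Prop :=
  exists U1 U2 : R -> R,
    (forall r, 0 < r ->
       is_derive U r (U1 r) /\ is_derive U1 r (U2 r) /\
       - U2 r - (INR N - 1) / r * U1 r + U r = Rpower (U r) p) /\
    (forall r, 0 < r -> 0 < U r) /\
    filterlim (fun r => Rpower r theta * U r) (at_right 0) (locally A_pN).

Definition eta_p (U : R -> R) (z : R) : R :=
  let r := exp (- m_p * z) in / A_pN * Rpower r theta * U r - 1.

Definition eta_tilde (U : R -> R) (z : R) : R := eta_p U z - f_p z.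

(** zeta_tilde_p: the unique real with e^{-m zeta} = c / sqrt p *)
Definition zeta_tilde (c : R) : R := - ln (c / sqrt p) / m_p.

Definition E_p : R := exp (- (alpha_p + 8 * m_p) * PI / (2 * beta_p)).

Definition P_N (c : R) : R :=
  let zt := zeta_tilde c in
  let q := Rabs (phi_p (f_p zt)) / f_p zt in
  if (N <? 10)%nat then
    q * (4 / ((alpha_p + 8 * m_p) ^ 2 + 4 * beta_p ^ 2)) * (1 + E_p)
  else
    q * (1 / (2 * beta_p * (alpha_p / 2 + 4 * m_p - beta_p))).

Definition c_condition (c : R) : Prop :=
  if (N <? 10)%nat then P_N c < / 2 * ((1 - E_p) / (1 + E_p))
  else P_N c < / 2.

Definition zeta1_set (U : R -> R) (c eps0 : R) (z : R) : Prop :=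
  zeta_tilde c <= z /\
  forall y, z <= y -> Rabs (eta_tilde U y) <= (1 + eps0) * P_N c * f_p y.

(** zeta_1^* as an element of Rbar (+oo when the set is empty). *)
Definition zeta1_star (U : R -> R) (c eps0 : R) : Rbar :=
  Glb_Rbar (zeta1_set U c eps0).

End Defs.

(* Set h := phi(eta) + m^2 e^(-2 m zeta) eta.  The Emden-Fowler change of variables
   r = e^(-m zeta) turns the equation for U into the constant-coefficient equation
   eta~'' - alpha eta~' + (p - 1) eta~ = h, the profile f absorbing the inhomogeneous part.
   Beyond zeta_1^* the defining bound pins eta between (1 - M) f and (1 + M) f with
   M = (1 + eps0) P_N < 0.55, and p f <= 1/4 beyond zeta~_p, so h is negative and
   comparable to -p^2 f^2.
   If p - 1 > alpha^2 / 4, then v = e^(-alpha zeta / 2) eta~ solves v'' + beta^2 v = k with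
   k(zeta) <= k(zeta + pi / beta), because f loses the factor e^(-2 m pi / beta) over a half
   period.  Comparing v with sin(beta t) gives v(zeta) <= v(zeta + 2 pi / beta), and the
   exponential decay of v forces v <= 0.  Otherwise the characteristic roots alpha/2 +- beta
   are real, h <= 0 makes e^((beta - alpha/2) zeta) eta~ nondecreasing, and its decay again
   forces it to be nonpositive.  Continuity extends the conclusion to zeta_1^* itself. *)

From Stdlib Require Import Reals Lra Psatz Classical.
From Coquelicot Require Import Coquelicot.
Open Scope R_scope.

Lemma exp_le_compat (x y : R) : x <= y -> exp x <= exp y.
Proof.
  intros [Hlt | ->]; [apply Rlt_le, exp_increasing, Hlt | apply Rle_refl].
Qed.

Lemma le_of_is_derive_nonneg (F dF : R -> R) (a b : R) : a <= b ->
  (forall x, a <= x <= b -> is_derive F x (dF x)) ->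
  (forall x, a <= x <= b -> 0 <= dF x) -> F a <= F b.
Proof.
  intros Hab HF Hd.
  destruct (Req_dec a b) as [<-|Hne]; [lra|].
  destruct (MVT_cor3 F dF a b) as (x & Hax & Hxb & ->); [lra| |].
  - intros x Hax Hxb. apply is_derive_Reals, HF; lra.
  - pose proof (Hd x (conj Hax Hxb)). nra.
Qed.

Lemma continuity_pt_of_is_derive (F : R -> R) (x l : R) :
  is_derive F x l -> continuity_pt F x.
Proof.
  intros HF. apply continuity_pt_filterlim.
  apply (@ex_derive_continuous R_AbsRing R_NormedModule). now exists l.
Qed.

Lemma nonpos_of_nonpos_right (F : R -> R) (z : R) :
  continuity_pt F z -> (forall s, z < s -> F s <= 0) -> F z <= 0.
Proof.
  intros HF Hright. destruct (Rle_dec (F z) 0) as [|Hpos]; [assumption|].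
  destruct (HF (F z)) as (d & Hd & Hnear); [lra|].
  assert (Hs : F (z + d / 2) <= 0) by (apply Hright; lra).
  specialize (Hnear (z + d / 2)). unfold D_x, no_cond, dist in Hnear; simpl in Hnear.
  unfold R_dist in Hnear. rewrite Rabs_pos_eq in Hnear by lra.
  assert (Hclose : Rabs (F (z + d / 2) - F z) < F z)
    by (apply Hnear; repeat split; lra).
  apply Rabs_def2 in Hclose. lra.
Qed.

Lemma exp_ge_taylor2 (t : R) : 0 <= t -> 1 + t + t ^ 2 / 2 <= exp t.
Proof.
  intros Ht. pose proof (exp_ge_taylor t 2 Ht) as H. simpl in H. lra.
Qed.

Lemma exp_le_inv_1m (t : R) : t < 1 -> exp t <= / (1 - t).
Proof.
  intros Ht. pose proof (exp_ineq1_le (- t)) as H. rewrite exp_Ropp in H.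
  pose proof (exp_pos t).
  replace (exp t) with (/ / exp t) by (field; lra).
  apply Rinv_le_contravar; lra.
Qed.

Lemma ln_1p_le (y : R) : 0 < 1 + y -> ln (1 + y) <= y.
Proof.
  intros Hy. rewrite <- (ln_exp y) at 2. apply ln_le; [lra | apply exp_ineq1_le].
Qed.

Lemma ln_1p_ge (y : R) : 0 <= y -> y - y ^ 2 / 2 <= ln (1 + y).
Proof.
  intros Hy.
  assert (H := le_of_is_derive_nonneg (fun y => ln (1 + y) - y + y ^ 2 / 2)
                 (fun y => y ^ 2 / (1 + y)) 0 y Hy).
  simpl in H. rewrite Rplus_0_r, ln_1 in H.
  enough (0 - 0 + 0 * (0 * 1) / 2 <= ln (1 + y) - y + y * (y * 1) / 2) by lra.
  apply H.
  - intros x Hx. auto_derive; [lra | field; lra].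
  - intros x Hx. apply Rdiv_le_0_compat; nra.
Qed.

Lemma exp_geom (c : R) (n : nat) : exp (c * INR n) = exp c ^ n.
Proof.
  induction n as [|n IH].
  - now rewrite Rmult_0_r, exp_0.
  - rewrite S_INR, <- tech_pow_Rmult, <- IH, <- exp_plus. f_equal. ring.
Qed.

Lemma nonpos_of_le_exp_decay (v K c : R) : 0 < c ->
  (forall n : nat, v <= K * exp (- c * INR n)) -> v <= 0.
Proof.
  intros Hc Hv.
  assert (Hq : Rabs (exp (- c)) < 1).
  { rewrite Rabs_pos_eq by apply Rlt_le, exp_pos.
    rewrite <- exp_0. apply exp_increasing. lra. }
  assert (Hlim := is_lim_seq_scal_l _ K _ (is_lim_seq_geom _ Hq)).
  simpl in Hlim. rewrite Rmult_0_r in Hlim.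
  apply (is_lim_seq_le (fun _ => v) (fun n => K * exp (- c) ^ n) v 0);
    [| apply is_lim_seq_const | exact Hlim].
  intros n. rewrite <- exp_geom. apply Hv.
Qed.

Lemma exp_ge_50 (X : R) : 5.4 <= X -> 50 <= exp X.
Proof.
  intros HX. replace X with (X / 2 + X / 2) by field. rewrite exp_plus.
  pose proof (exp_ge_taylor2 (X / 2) ltac:(lra)).
  assert (7.3 <= exp (X / 2)) by nra.
  nra.
Qed.

(** * Sign of decaying solutions of damped linear oscillators *)

Ltac rewrite_Derive H :=
  repeat match goal with |- context [Derive ?f ?y] =>
    rewrite (is_derive_unique f y _ (H y)) end.

Lemma sturm_half_period_shift (v v1 k : R -> R) (b z : R) : 0 < b ->
  (forall x, is_derive v x (v1 x)) ->
  (forall x, is_derive v1 x (k x - b ^ 2 * v x)) ->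
  (forall x, z < x -> k x <= k (x + PI / b)) ->
  forall s, z < s -> v s <= v (s + 2 * (PI / b)).
Proof.
  intros Hb Hv Hv1 Hk s Hs.
  set (T := PI / b).
  assert (HT : 0 < T) by (apply Rdiv_lt_0_compat; [apply PI_RGT_0 | lra]).
  assert (HbT : b * T = PI) by (unfold T; field; lra).
  (* [Q s] pairs [v (s + .)] with the solution [sin (b t)] of the homogeneous equation. *)
  set (Q := fun s t => v1 (s + t) * sin (b * t) - b * v (s + t) * cos (b * t)).
  assert (HQ : forall s t, is_derive (Q s) t (k (s + t) * sin (b * t))).
  { intros s' t. unfold Q. auto_derive.
    - split; [eexists; apply Hv1 | split; [eexists; apply Hv | auto]].
    - rewrite_Derive Hv1. rewrite_Derive Hv. field. }
  assert (Hmono : Q (s + T) 0 - Q s 0 <= Q (s + T) T - Q s T).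
  { apply (le_of_is_derive_nonneg (fun t => Q (s + T) t - Q s t)
             (fun t => (k (s + T + t) - k (s + t)) * sin (b * t))); [lra | |].
    - intros t _. rewrite Rmult_minus_distr_r.
      apply (is_derive_minus (Q (s + T)) (Q s)); apply HQ.
    - intros t Ht. apply Rmult_le_pos.
      + replace (s + T + t) with (s + t + T) by ring.
        assert (k (s + t) <= k (s + t + T)) by (apply Hk; lra). lra.
      + apply sin_ge_0; [nra | rewrite <- HbT; apply Rmult_le_compat_l; lra]. }
  unfold Q in Hmono.
  rewrite !Rmult_0_r, sin_0, cos_0, HbT, sin_PI, cos_PI, !Rplus_0_r in Hmono.
  replace (s + T + T) with (s + 2 * T) in Hmono by ring.
  apply (Rmult_le_reg_l b); lra.
Qed.

Lemma ode_underdamped_nonpos (a b q c K z : R) (g g1 g2 h : R -> R) :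
  0 < b -> q - a ^ 2 = b ^ 2 -> 0 < c ->
  (forall x, is_derive g x (g1 x)) -> (forall x, is_derive g1 x (g2 x)) ->
  (forall x, g2 x - 2 * a * g1 x + q * g x = h x) ->
  (forall x, z < x -> exp (- a * x) * h x <= exp (- a * (x + PI / b)) * h (x + PI / b)) ->
  (forall x, z < x -> Rabs (exp (- a * x) * g x) <= K * exp (- c * x)) ->
  forall s, z < s -> g s <= 0.
Proof.
  intros Hb Hq Hc Hg Hg1 Hode Hh Hdecay s Hs.
  set (T := PI / b).
  assert (HT : 0 < T) by (apply Rdiv_lt_0_compat; [apply PI_RGT_0 | lra]).
  set (v := fun x => exp (- a * x) * g x).
  assert (Hshift : forall x, z < x -> v x <= v (x + 2 * T)).
  { apply (sturm_half_period_shift v (fun x => exp (- a * x) * (g1 x - a * g x))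
             (fun x => exp (- a * x) * h x)); auto.
    - intros x. unfold v. auto_derive; [eexists; apply Hg|].
      rewrite_Derive Hg. field.
    - intros x. auto_derive.
      + split; [eexists; apply Hg1 | split; [eexists; apply Hg | auto]].
      + rewrite_Derive Hg1. rewrite_Derive Hg. rewrite <- Hode, <- Hq. unfold v. field. }
  assert (Hiter : forall n : nat, v s <= v (s + 2 * T * INR n)).
  { induction n as [|n IH].
    - simpl. rewrite Rmult_0_r, Rplus_0_r. lra.
    - rewrite S_INR. eapply Rle_trans; [apply IH|].
      replace (s + 2 * T * (INR n + 1)) with (s + 2 * T * INR n + 2 * T) by ring.
      apply Hshift. pose proof (pos_INR n). nra. }
  assert (Hvs : v s <= 0).
  { apply (nonpos_of_le_exp_decay _ (K * exp (- c * s)) (2 * T * c)); [nra|].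
    intros n. eapply Rle_trans; [apply Hiter|].
    eapply Rle_trans; [apply Rle_abs|].
    assert (Hn : z < s + 2 * T * INR n) by (pose proof (pos_INR n); nra).
    eapply Rle_trans; [apply (Hdecay _ Hn)|].
    rewrite (Rmult_assoc K), <- exp_plus. apply Req_le. f_equal. f_equal. ring. }
  unfold v in Hvs. pose proof (exp_pos (- a * s)). nra.
Qed.

Lemma deriv_nonneg_of_deriv2_le_decay (V V1 V2 : R -> R) (b c K z : R) :
  0 <= b -> 0 < c ->
  (forall x, is_derive V x (V1 x)) -> (forall x, is_derive V1 x (V2 x)) ->
  (forall x, z < x -> V2 x <= 2 * b * V1 x) ->
  (forall x, z < x -> Rabs (V x) <= K * exp (- c * x)) ->
  forall x0, z < x0 -> 0 <= V1 x0.
Proof.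
  intros Hb Hc HV HV1 Hconv Hdecay x0 Hx0.
  destruct (Rle_dec 0 (V1 x0)) as [|Hneg]; [assumption|]. exfalso.
  (* [exp (-2 b x) * V1 x] is nonincreasing, so [V1] stays below [V1 x0 < 0]. *)
  assert (Hslope : forall x, x0 <= x -> V1 x <= V1 x0).
  { intros x Hx.
    assert (HY : - (exp (- 2 * b * x0) * V1 x0) <= - (exp (- 2 * b * x) * V1 x)).
    { apply (le_of_is_derive_nonneg (fun x => - (exp (- 2 * b * x) * V1 x))
               (fun x => - (exp (- 2 * b * x) * (V2 x - 2 * b * V1 x)))); [lra | |].
      - intros y _. auto_derive; [eexists; apply HV1 | rewrite_Derive HV1; ring].
      - intros y Hy. pose proof (exp_pos (- 2 * b * y)).
        assert (V2 y <= 2 * b * V1 y) by (apply Hconv; lra). nra. }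
    assert (Hgrow : exp (- 2 * b * x) <= exp (- 2 * b * x0)) by (apply exp_le_compat; nra).
    pose proof (exp_pos (- 2 * b * x)). nra. }
  assert (Hlin : forall x, x0 <= x -> V x <= V x0 + V1 x0 * (x - x0)).
  { intros x Hx.
    enough (V x0 + V1 x0 * (x0 - x0) - V x0 <= V x0 + V1 x0 * (x - x0) - V x) by lra.
    apply (le_of_is_derive_nonneg (fun y => V x0 + V1 x0 * (y - x0) - V y)
             (fun y => V1 x0 - V1 y)); [lra | |].
    - intros y _. auto_derive; [eexists; apply HV | rewrite_Derive HV; ring].
    - intros y Hy. specialize (Hslope y (proj1 Hy)). lra. }
  set (B := Rabs K * exp (- c * x0)).
  assert (Hbelow : forall x, x0 <= x -> - B <= V x).
  { intros x Hx. assert (Hz : z < x) by lra.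
    pose proof (proj1 (Rabs_le_between _ _) (Hdecay x Hz)).
    assert (exp (- c * x) <= exp (- c * x0)) by (apply exp_le_compat; nra).
    pose proof (Rle_abs K). pose proof (Rabs_pos K). pose proof (exp_pos (- c * x)).
    unfold B. nra. }
  set (x1 := x0 + (V x0 + B + 1) / - V1 x0).
  assert (Hx01 : x0 <= x1).
  { pose proof (Hbelow x0 (Rle_refl _)).
    unfold x1. assert (0 <= (V x0 + B + 1) / - V1 x0) by (apply Rdiv_le_0_compat; lra). lra. }
  assert (Hx1 : V x0 + V1 x0 * (x1 - x0) = - B - 1) by (unfold x1; field; lra).
  pose proof (Hlin x1 Hx01). pose proof (Hbelow x1 Hx01). lra.
Qed.

Lemma nonpos_of_deriv2_le_decay (V V1 V2 : R -> R) (b c K z : R) :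
  0 <= b -> 0 < c ->
  (forall x, is_derive V x (V1 x)) -> (forall x, is_derive V1 x (V2 x)) ->
  (forall x, z < x -> V2 x <= 2 * b * V1 x) ->
  (forall x, z < x -> Rabs (V x) <= K * exp (- c * x)) ->
  forall s, z < s -> V s <= 0.
Proof.
  intros Hb Hc HV HV1 Hconv Hdecay s Hs.
  pose proof (deriv_nonneg_of_deriv2_le_decay V V1 V2 b c K z Hb Hc HV HV1 Hconv Hdecay)
    as Hincr.
  apply (nonpos_of_le_exp_decay _ (K * exp (- c * s)) c Hc). intros n.
  pose proof (pos_INR n).
  apply Rle_trans with (V (s + INR n)).
  - apply (le_of_is_derive_nonneg V V1); [lra | intros x _; apply HV |].
    intros x Hx. apply Hincr. lra.
  - eapply Rle_trans; [apply Rle_abs | eapply Rle_trans; [apply Hdecay; lra|]].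
    rewrite (Rmult_assoc K), <- exp_plus. apply Req_le. f_equal. f_equal. ring.
Qed.

Lemma ode_overdamped_nonpos (a b q c K z : R) (g g1 g2 h : R -> R) :
  0 <= b -> q - a ^ 2 = - b ^ 2 -> 0 < c ->
  (forall x, is_derive g x (g1 x)) -> (forall x, is_derive g1 x (g2 x)) ->
  (forall x, g2 x - 2 * a * g1 x + q * g x = h x) ->
  (forall x, z < x -> h x <= 0) ->
  (forall x, z < x -> Rabs (exp ((b - a) * x) * g x) <= K * exp (- c * x)) ->
  forall s, z < s -> g s <= 0.
Proof.
  intros Hb Hq Hc Hg Hg1 Hode Hh Hdecay s Hs.
  set (w := fun x => exp ((b - a) * x)).
  assert (Hws : 0 < w s) by apply exp_pos.
  enough (w s * g s <= 0) by nra.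
  (* [w * g] satisfies [V'' - 2 b V' = w * h]. *)
  apply (nonpos_of_deriv2_le_decay (fun x => w x * g x)
           (fun x => w x * (g1 x + (b - a) * g x))
           (fun x => w x * (h x + 2 * b * (g1 x + (b - a) * g x))) b c K z); auto.
  - intros x. unfold w. auto_derive; [eexists; apply Hg | rewrite_Derive Hg; ring].
  - intros x. unfold w. auto_derive.
    + split; [eexists; apply Hg1 | split; [eexists; apply Hg | auto]].
    + rewrite_Derive Hg1. rewrite_Derive Hg. rewrite <- Hode.
      replace q with (a ^ 2 - b ^ 2) by lra. ring.
  - intros x Hx. specialize (Hh x Hx). pose proof (exp_pos ((b - a) * x)).
    unfold w. nra.
Qed.

Lemma phi_p_ge (p y : R) : 0 <= p -> 0 <= y -> p * y < 1 ->
  - (p * y) ^ 2 / (1 - p * y) <= phi_p p y.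
Proof.
  intros Hp Hy Hpy. unfold phi_p, Rpower.
  assert (Hexp : exp (p * ln (1 + y)) <= / (1 - p * y)).
  { eapply Rle_trans; [|apply exp_le_inv_1m; lra].
    apply exp_le_compat, Rmult_le_compat_l; [lra | apply ln_1p_le; lra]. }
  replace (- (p * y) ^ 2 / (1 - p * y)) with (1 + p * y - / (1 - p * y))
    by (field; lra).
  lra.
Qed.

Lemma phi_p_le (p y : R) : 0 <= p -> 0 <= y <= 2 ->
  phi_p p y <= p * y ^ 2 / 2 - (p * (y - y ^ 2 / 2)) ^ 2 / 2.
Proof.
  intros Hp Hy. unfold phi_p, Rpower.
  assert (Hlow : p * (y - y ^ 2 / 2) <= p * ln (1 + y))
    by (apply Rmult_le_compat_l; [lra | apply ln_1p_ge; lra]).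
  assert (Hnn : 0 <= p * (y - y ^ 2 / 2)) by (apply Rmult_le_pos; nra).
  assert (Hsq : (p * (y - y ^ 2 / 2)) ^ 2 <= (p * ln (1 + y)) ^ 2)
    by (apply pow_incr; lra).
  pose proof (exp_ge_taylor2 (p * ln (1 + y)) ltac:(lra)).
  lra.
Qed.

Lemma forcing_value_bounds (p y F M den : R) : 1000 <= p -> 0 < F -> 0 <= M < 0.55 ->
  (1 - M) * F <= y <= (1 + M) * F -> p * F <= 1 / 4 -> 0 <= den <= 7 * p ->
  - (164 / 100) * p ^ 2 * y ^ 2 <= phi_p p y + den * F * y <= - (43 / 100) * p ^ 2 * y ^ 2.
Proof.
  (* [phi_p p y] is [-p (p - 1) y^2 / 2] to leading order, while [den F y] is only of
     order [p y^2]. *)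
  intros Hp HF HM Hy HpF Hden.
  assert (Hy0 : 0 < y) by nra.
  assert (Hpy : p * y <= 0.3875) by nra.
  assert (Hy1 : y <= 0.0004) by (apply (Rmult_le_reg_l p); nra).
  assert (HdenF : 0 <= den * F * y <= 7 * p * (y / 0.45) * y).
  { assert (F <= y / 0.45) by (apply Rle_div_r; nra).
    split; [apply Rmult_le_pos; [apply Rmult_le_pos|]; lra|].
    apply Rmult_le_compat_r; [lra|]. apply Rmult_le_compat; lra. }
  split.
  - pose proof (phi_p_ge p y ltac:(lra) ltac:(lra) ltac:(lra)) as Hphi.
    assert (- (164 / 100) * p ^ 2 * y ^ 2 <= - (p * y) ^ 2 / (1 - p * y)).
    { replace (- (p * y) ^ 2 / (1 - p * y)) with (- ((p * y) ^ 2 * / (1 - p * y)))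
        by (field; lra).
      assert (/ (1 - p * y) <= 164 / 100).
      { replace (164 / 100) with (/ (100 / 164)) by field.
        apply Rinv_le_contravar; lra. }
      nra. }
    lra.
  - pose proof (phi_p_le p y ltac:(lra) ltac:(lra)) as Hphi.
    assert ((p * (y - y ^ 2 / 2)) ^ 2 >= 0.998 * p ^ 2 * y ^ 2).
    { replace ((p * (y - y ^ 2 / 2)) ^ 2) with (p ^ 2 * y ^ 2 * (1 - y / 2) ^ 2) by field.
      assert ((1 - y / 2) ^ 2 >= 0.998) by nra.
      assert (0 <= p ^ 2 * y ^ 2) by nra. nra. }
    assert (16.06 * p * y ^ 2 <= 0.069 * p ^ 2 * y ^ 2) by nra.
    nra.
Qed.

Lemma underdamped_forcing_shift (h0 h1 y0 y1 F0 F1 P ea e2 M : R) :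
  0 < P -> h0 <= - (43 / 100) * P * y0 ^ 2 -> - (164 / 100) * P * y1 ^ 2 <= h1 ->
  (1 - M) * F0 <= y0 -> 0 <= y1 <= (1 + M) * F1 -> F1 = F0 * e2 -> 0 < F0 ->
  0 <= M < 0.55 -> 0 < ea -> 0 < e2 -> ea * e2 ^ 2 <= 1 / 50 -> h0 <= ea * h1.
Proof.
  intros HP Hh0 Hh1 Hy0 Hy1 HF1 HF0 HM Hea He2 Hsmall. subst F1.
  assert (Hy0sq : ((1 - M) * F0) ^ 2 <= y0 ^ 2) by (apply pow_incr; split; nra).
  assert (Hy1sq : y1 ^ 2 <= ((1 + M) * (F0 * e2)) ^ 2) by (apply pow_incr; lra).
  assert (HPF : 0 < P * F0 ^ 2) by (apply Rmult_lt_0_compat; [lra | apply pow_lt; lra]).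
  assert (Hconst : ea * e2 ^ 2 * (164 / 100) * (1 + M) ^ 2 <= (43 / 100) * (1 - M) ^ 2).
  { assert (0 <= ea * e2 ^ 2) by (apply Rmult_le_pos; [lra | apply pow2_ge_0]).
    assert ((1 + M) ^ 2 <= 2.4025) by nra.
    assert (0.2025 <= (1 - M) ^ 2) by nra.
    assert (ea * e2 ^ 2 * (1 + M) ^ 2 <= 1 / 50 * 2.4025)
      by (apply Rmult_le_compat; try lra; apply pow2_ge_0).
    lra. }
  assert (H0 : h0 <= - ((43 / 100) * (1 - M) ^ 2) * (P * F0 ^ 2)).
  { apply Rle_trans with (- (43 / 100) * P * y0 ^ 2); [lra|]. nra. }
  assert (H1 : - (ea * e2 ^ 2 * (164 / 100) * (1 + M) ^ 2) * (P * F0 ^ 2) <= ea * h1).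
  { apply Rle_trans with (ea * (- (164 / 100) * P * y1 ^ 2)); [|nra].
    replace (- (ea * e2 ^ 2 * (164 / 100) * (1 + M) ^ 2) * (P * F0 ^ 2))
      with (ea * (- (164 / 100) * P * ((1 + M) * (F0 * e2)) ^ 2)) by ring.
    apply Rmult_le_compat_l; nra. }
  nra.
Qed.

Lemma Rabs_exp_mul_le (w c m M D x G : R) : w - 2 * m = - c ->
  Rabs G <= M * (D * exp (- 2 * m * x)) ->
  Rabs (exp (w * x) * G) <= M * D * exp (- c * x).
Proof.
  intros Hw HG. rewrite Rabs_mult, Rabs_pos_eq by apply Rlt_le, exp_pos.
  replace (M * D * exp (- c * x)) with (exp (w * x) * (M * (D * exp (- 2 * m * x)))).
  - apply Rmult_le_compat_l; [apply Rlt_le, exp_pos | exact HG].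
  - replace (- c * x) with (w * x + - 2 * m * x) by (rewrite <- Hw; ring).
    rewrite exp_plus. ring.
Qed.

Lemma tolerance_bounds (P eps0 e F : R) : 0 < eps0 < 1 / 10 -> P < / 2 -> 0 < F ->
  Rabs e <= (1 + eps0) * P * F -> 0 <= (1 + eps0) * P < 0.55.
Proof.
  intros Heps HP HF He. pose proof (Rabs_pos e).
  assert (HM : 0 <= (1 + eps0) * P).
  { apply Rnot_lt_le. intros Hneg. assert ((1 + eps0) * P * F < 0) by nra. lra. }
  split; [exact HM | nra].
Qed.

(** * The parameters for large p *)

Definition D_denom (N : nat) (p : R) : R :=
  4 * m_p N p ^ 2 + 2 * alpha_p N p * m_p N p + (p - 1).

Section Constants.
Variables (N : nat) (p : R).
Hypotheses (HN : 3 <= INR N) (Hp : 1000 <= p).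

Lemma theta_bounds : 0 < theta p <= 1 / 400.
Proof.
  unfold theta. split; [apply Rdiv_lt_0_compat; lra|].
  apply Rle_div_l; lra.
Qed.

Lemma pred_mul_theta : (p - 1) * theta p = 2.
Proof. unfold theta. field. lra. Qed.

Lemma kappa_bounds : theta p / 2 <= kappa N p <= theta p * (INR N - 2).
Proof. pose proof theta_bounds. unfold kappa. split; nra. Qed.

Lemma m_p_sq : m_p N p ^ 2 = / kappa N p.
Proof.
  pose proof kappa_bounds. pose proof theta_bounds.
  unfold m_p. rewrite pow_inv, <- Rsqr_pow2, Rsqr_sqrt by lra. reflexivity.
Qed.

Lemma m_p_sq_mul_kappa : m_p N p ^ 2 * (theta p * (INR N - 2 - theta p)) = 1.
Proof.
  pose proof kappa_bounds. pose proof theta_bounds.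
  rewrite m_p_sq. fold (kappa N p). field. lra.
Qed.

Lemma m_p_pos : 0 < m_p N p.
Proof.
  pose proof kappa_bounds. pose proof theta_bounds.
  apply Rinv_0_lt_compat, sqrt_lt_R0. lra.
Qed.

Lemma m_p_sq_bounds : (p - 1) / (2 * (INR N - 2)) <= m_p N p ^ 2 <= p - 1.
Proof.
  pose proof kappa_bounds. pose proof theta_bounds.
  rewrite m_p_sq. split.
  - replace ((p - 1) / (2 * (INR N - 2))) with (/ (theta p * (INR N - 2)))
      by (unfold theta; field; lra).
    apply Rinv_le_contravar; lra.
  - replace (p - 1) with (/ (theta p / 2)) by (unfold theta; field; lra).
    apply Rinv_le_contravar; lra.
Qed.

Lemma alpha_p_nonneg : 0 <= alpha_p N p.
Proof.
  pose proof m_p_pos. pose proof theta_bounds.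
  unfold alpha_p. apply Rmult_le_pos; lra.
Qed.

Lemma alpha_p_mul_m_p : alpha_p N p * m_p N p <= (p - 1) / 2.
Proof.
  pose proof theta_bounds. pose proof pred_mul_theta.
  pose proof m_p_sq_mul_kappa. pose proof (pow2_ge_0 (m_p N p)).
  unfold alpha_p. nra.
Qed.

Lemma D_denom_bounds : p - 1 <= D_denom N p <= 7 * p.
Proof.
  pose proof m_p_sq_bounds. pose proof alpha_p_mul_m_p.
  pose proof alpha_p_nonneg. pose proof m_p_pos.
  unfold D_denom. nra.
Qed.

Lemma D_p_mul_denom : D_p N p * D_denom N p = m_p N p ^ 2.
Proof. pose proof D_denom_bounds. unfold D_p. fold (D_denom N p). field. lra. Qed.

Lemma D_p_bounds : 0 < D_p N p <= 1 / 4.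
Proof.
  pose proof D_denom_bounds. pose proof m_p_pos. pose proof alpha_p_nonneg.
  unfold D_p. fold (D_denom N p). split.
  - apply Rdiv_lt_0_compat; [apply pow_lt|]; lra.
  - apply Rle_div_l; [lra|]. unfold D_denom. nra.
Qed.

End Constants.

Lemma beta_p_sq (N : nat) (p : R) :
  beta_p N p ^ 2 = Rabs (p - 1 - (alpha_p N p / 2) ^ 2).
Proof. unfold beta_p. rewrite <- Rsqr_pow2. apply Rsqr_sqrt, Rabs_pos. Qed.

Lemma beta_p_pos (N : nat) (p : R) : 0 < p - 1 - (alpha_p N p / 2) ^ 2 -> 0 < beta_p N p.
Proof.
  intros Hdisc. unfold beta_p. apply sqrt_lt_R0. rewrite Rabs_pos_eq; lra.
Qed.

Lemma beta_p_le_shift (N : nat) (p : R) : 3 <= INR N -> 1000 <= p ->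
  0 < p - 1 - (alpha_p N p / 2) ^ 2 ->
  9 / 5 * beta_p N p <= alpha_p N p / 2 + 4 * m_p N p.
Proof.
  intros HN Hp HD.
  pose proof (m_p_pos N p HN Hp) as Hm. pose proof (theta_bounds p Hp).
  pose proof (m_p_sq_bounds N p HN Hp) as [Hmlow _].
  assert (Hb2 : beta_p N p ^ 2 <= p - 1).
  { rewrite beta_p_sq, Rabs_pos_eq by lra. pose proof (pow2_ge_0 (alpha_p N p / 2)). lra. }
  pose proof (beta_p_pos N p HD).
  assert (Hshift : m_p N p * (INR N + 5) / 2 <= alpha_p N p / 2 + 4 * m_p N p)
    by (unfold alpha_p; nra).
  assert (HN2 : 28 * (INR N - 2) <= (INR N + 5) ^ 2)
    by (pose proof (pow2_ge_0 (INR N - 9)); nra).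
  assert (Hsq : 7 / 2 * (p - 1) <= (m_p N p * (INR N + 5) / 2) ^ 2).
  { replace ((m_p N p * (INR N + 5) / 2) ^ 2) with (m_p N p ^ 2 * (INR N + 5) ^ 2 / 4)
      by field.
    apply Rle_trans with ((p - 1) / (2 * (INR N - 2)) * (28 * (INR N - 2)) / 4).
    - apply Req_le. field. lra.
    - apply Rmult_le_compat_r; [lra|].
      apply Rmult_le_compat; try lra. apply Rdiv_le_0_compat; lra. }
  assert (HS : 0 <= m_p N p * (INR N + 5) / 2) by nra.
  assert (Hsq' : Rsqr (9 / 5 * beta_p N p) <= Rsqr (m_p N p * (INR N + 5) / 2))
    by (rewrite !Rsqr_pow2; nra).
  apply Rsqr_incr_0_var in Hsq'; lra.
Qed.

Lemma half_period_factor_small (N : nat) (p : R) : 3 <= INR N -> 1000 <= p ->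
  0 < p - 1 - (alpha_p N p / 2) ^ 2 ->
  exp (- (alpha_p N p / 2) * (PI / beta_p N p)) *
    exp (- 2 * m_p N p * (PI / beta_p N p)) ^ 2 <= 1 / 50.
Proof.
  intros HN Hp Hdisc.
  pose proof (beta_p_pos N p Hdisc). pose proof (beta_p_le_shift N p HN Hp Hdisc).
  pose proof PI2_3_2.
  rewrite <- exp_geom, <- exp_plus.
  replace (- (alpha_p N p / 2) * (PI / beta_p N p) + - 2 * m_p N p * (PI / beta_p N p) * INR 2)
    with (- ((alpha_p N p / 2 + 4 * m_p N p) / beta_p N p * PI)) by (simpl; field; lra).
  rewrite exp_Ropp. replace (1 / 50) with (/ 50) by field.
  apply Rinv_le_contravar; [lra|]. apply exp_ge_50.
  assert (9 / 5 <= (alpha_p N p / 2 + 4 * m_p N p) / beta_p N p)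
    by (apply (Rle_div_r _ _ (beta_p N p)); lra).
  nra.
Qed.

(** * The equation for eta~ *)

Definition forcing (N : nat) (p : R) (U : R -> R) (z : R) : R :=
  phi_p p (eta_p N p U z) + m_p N p ^ 2 * exp (- 2 * m_p N p * z) * eta_p N p U z.

Lemma emden_fowler_ode (n p a th m D : R) (U U1 U2 : R -> R) :
  m ^ 2 * (th * (n - 2 - th)) = 1 ->
  D * (4 * m ^ 2 + 2 * (m * (n - 2 - 2 * th)) * m + (p - 1)) = m ^ 2 ->
  (forall r, 0 < r -> is_derive U r (U1 r) /\ is_derive U1 r (U2 r) /\
     - U2 r - (n - 1) / r * U1 r + U r = Rpower (U r) p) ->
  exists g1 g2 : R -> R,
    (forall x, is_derive (fun x => a * exp (th * (- m * x)) * U (exp (- m * x)) - 1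
                                   - D * exp (- m * x) ^ 2) x (g1 x)) /\
    (forall x, is_derive g1 x (g2 x)) /\
    (forall x, let r := exp (- m * x) in let E := exp (th * (- m * x)) in
       g2 x - 2 * (m * (n - 2 - 2 * th) / 2) * g1 x
         + (p - 1) * (a * E * U r - 1 - D * r ^ 2) =
       - (a * E * m ^ 2 * r ^ 2 * Rpower (U r) p - 1 - p * (a * E * U r - 1))
         + m ^ 2 * r ^ 2 * (a * E * U r - 1)).
Proof.
  intros Hmk HD HU.
  assert (HdU : forall t, is_derive U (exp t) (U1 (exp t)))
    by (intros t; apply (HU _ (exp_pos t))).
  assert (HdU1 : forall t, is_derive U1 (exp t) (U2 (exp t)))
    by (intros t; apply (HU _ (exp_pos t))).
  assert (HDU : forall t, Derive (fun y : R => U y) (exp t) = U1 (exp t))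
    by (intros t; apply is_derive_unique, HdU).
  assert (HDU1 : forall t, Derive (fun y : R => U1 y) (exp t) = U2 (exp t))
    by (intros t; apply is_derive_unique, HdU1).
  exists (fun x => a * exp (th * (- m * x)) *
            (- m * th * U (exp (- m * x)) - m * exp (- m * x) * U1 (exp (- m * x)))
          + 2 * m * D * exp (- m * x) ^ 2).
  exists (fun x => a * exp (th * (- m * x)) *
            (m ^ 2 * th ^ 2 * U (exp (- m * x))
             + 2 * m ^ 2 * th * exp (- m * x) * U1 (exp (- m * x))
             + m ^ 2 * exp (- m * x) * U1 (exp (- m * x))
             + m ^ 2 * exp (- m * x) ^ 2 * U2 (exp (- m * x)))
          - 4 * m ^ 2 * D * exp (- m * x) ^ 2).
  split; [|split].
  - intros x. auto_derive; [eexists; apply HdU|]. rewrite HDU. ring.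
  - intros x. auto_derive.
    + split; [eexists; apply HdU | split; [eexists; apply HdU1 | exact I]].
    + rewrite HDU, HDU1. field.
  - intros x. cbv zeta. set (r := exp (- m * x)). set (E := exp (th * (- m * x))).
    destruct (HU r (exp_pos _)) as (_ & _ & Hode).
    assert (Hr : r <> 0) by apply Rgt_not_eq, exp_pos.
    replace (U2 r) with (U r - Rpower (U r) p - (n - 1) / r * U1 r) by lra.
    (* The residual is a combination of the two constraints [Hmk] and [HD]. *)
    apply Rminus_diag_uniq. transitivity
      (a * E * U r * (m ^ 2 * (th * (n - 2 - th)) - 1)
       - r ^ 2 * (D * (4 * m ^ 2 + 2 * (m * (n - 2 - 2 * th)) * m + (p - 1)) - m ^ 2)).
    + field. exact Hr.
    + rewrite HD, Hmk. ring.
Qed.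

Section EtaOde.
Variables (N : nat) (p : R).
Hypotheses (HN : 3 <= INR N) (Hp : 1000 <= p).

Lemma A_pN_pos : 0 < A_pN N p.
Proof. apply exp_pos. Qed.

Lemma Rpower_inv_A_pN : Rpower (/ A_pN N p) p = / A_pN N p * m_p N p ^ 2.
Proof.
  pose proof A_pN_pos as HA. pose proof (kappa_bounds N p HN Hp). pose proof (theta_bounds p Hp).
  replace p with (1 + (p - 1)) at 2 by ring.
  rewrite Rpower_plus, Rpower_1 by (apply Rinv_0_lt_compat; lra). f_equal.
  rewrite m_p_sq by assumption.
  replace (/ A_pN N p) with (Rpower (A_pN N p) (- (1))) by (rewrite Rpower_Ropp, Rpower_1; auto).
  rewrite Rpower_mult. unfold A_pN. rewrite Rpower_mult.
  replace (1 / (p - 1) * (- (1) * (p - 1))) with (- (1)) by (field; lra).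
  rewrite Rpower_Ropp, Rpower_1; lra.
Qed.

Lemma eta_p_exp (U : R -> R) (x : R) : eta_p N p U x =
  / A_pN N p * exp (theta p * (- m_p N p * x)) * U (exp (- m_p N p * x)) - 1.
Proof. unfold eta_p, Rpower at 1. now rewrite ln_exp. Qed.

Lemma Rpower_succ_eta_p (U : R -> R) (x : R) : 0 < U (exp (- m_p N p * x)) ->
  Rpower (1 + eta_p N p U x) p =
  / A_pN N p * exp (theta p * (- m_p N p * x)) * m_p N p ^ 2 *
    exp (- 2 * m_p N p * x) * Rpower (U (exp (- m_p N p * x))) p.
Proof.
  intros HU. pose proof A_pN_pos as HA. pose proof (pred_mul_theta p Hp) as Hth.
  rewrite eta_p_exp. replace (1 + _) with
    (/ A_pN N p * exp (theta p * (- m_p N p * x)) * U (exp (- m_p N p * x))) by ring.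
  rewrite <- !Rpower_mult_distr by (try apply Rmult_lt_0_compat;
    try apply Rinv_0_lt_compat; try apply exp_pos; auto).
  rewrite Rpower_inv_A_pN.
  replace (Rpower (exp (theta p * (- m_p N p * x))) p)
    with (exp (theta p * (- m_p N p * x)) * exp (- 2 * m_p N p * x)); [ring|].
  unfold Rpower. rewrite ln_exp, <- exp_plus. f_equal.
  replace (p * (theta p * (- m_p N p * x))) with (p * theta p * (- m_p N p * x)) by ring.
  replace (p * theta p) with (theta p + 2) by lra. ring.
Qed.

Lemma eta_tilde_ode (U : R -> R) : is_Ustar N p U ->
  exists g1 g2 : R -> R,
    (forall x, is_derive (eta_tilde N p U) x (g1 x)) /\
    (forall x, is_derive g1 x (g2 x)) /\
    (forall x, g2 x - 2 * (alpha_p N p / 2) * g1 x + (p - 1) * eta_tilde N p U x =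
               forcing N p U x).
Proof.
  intros (U1 & U2 & HU & Hpos & _).
  pose proof (m_p_sq_mul_kappa N p HN Hp) as Hmk.
  pose proof (D_p_mul_denom N p HN Hp) as HD.
  unfold D_denom, alpha_p in HD.
  destruct (emden_fowler_ode (INR N) p (/ A_pN N p) (theta p) (m_p N p) (D_p N p) U U1 U2
              Hmk HD HU) as (g1 & g2 & Hg & Hg1 & Hode).
  assert (Hexp2 : forall x, exp (- 2 * m_p N p * x) = exp (- m_p N p * x) ^ 2)
    by (intros x; rewrite <- exp_geom; f_equal; simpl; ring).
  assert (Hext : forall x, eta_tilde N p U x =
    / A_pN N p * exp (theta p * (- m_p N p * x)) * U (exp (- m_p N p * x)) - 1
    - D_p N p * exp (- m_p N p * x) ^ 2).
  { intros x. unfold eta_tilde, f_p. now rewrite eta_p_exp, Hexp2. }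
  exists g1, g2. split; [|split]; [|exact Hg1|].
  - intros x. eapply is_derive_ext; [intros t; symmetry; apply Hext | apply Hg].
  - intros x. rewrite Hext. unfold forcing, phi_p, alpha_p.
    rewrite Rpower_succ_eta_p, eta_p_exp, Hexp2 by apply Hpos, exp_pos.
    rewrite (Hode x). ring.
Qed.

End EtaOde.

(** * Beyond zeta_1^* *)

Lemma f_p_beyond_zeta_tilde (N : nat) (p c x : R) : 3 <= INR N -> 1000 <= p -> 0 < c < 1 ->
  zeta_tilde N p c <= x -> 0 < f_p N p x /\ p * f_p N p x <= 1 / 4.
Proof.
  intros HN Hp Hc Hx.
  pose proof (D_p_bounds N p HN Hp). pose proof (m_p_pos N p HN Hp).
  assert (Hsp : 0 < sqrt p) by (apply sqrt_lt_R0; lra).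
  assert (Hcs : 0 < c / sqrt p) by (apply Rdiv_lt_0_compat; lra).
  assert (Hzt : exp (- 2 * m_p N p * zeta_tilde N p c) = c ^ 2 / p).
  { unfold zeta_tilde.
    replace (- 2 * m_p N p * (- ln (c / sqrt p) / m_p N p))
      with (ln (c / sqrt p) + ln (c / sqrt p)) by (field; lra).
    rewrite exp_plus, exp_ln by assumption.
    replace (c / sqrt p * (c / sqrt p)) with (c ^ 2 / (sqrt p * sqrt p)) by (field; lra).
    now rewrite sqrt_sqrt by lra. }
  assert (Hdecay : p * exp (- 2 * m_p N p * x) <= 1).
  { replace 1 with (p * (1 / p)) by (field; lra).
    apply Rmult_le_compat_l; [lra|].
    apply Rle_trans with (c ^ 2 / p).
    - rewrite <- Hzt. apply exp_le_compat. nra.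
    - apply Rmult_le_compat_r; [apply Rlt_le, Rinv_0_lt_compat; lra | nra]. }
  pose proof (exp_pos (- 2 * m_p N p * x)).
  unfold f_p. split; [apply Rmult_lt_0_compat; lra | nra].
Qed.

Lemma zeta1_star_le_bound (N : nat) (p : R) (U : R -> R) (c eps0 z : R) :
  Rbar_le (zeta1_star N p U c eps0) (Finite z) ->
  forall x, z < x -> zeta_tilde N p c <= x /\
    Rabs (eta_tilde N p U x) <= (1 + eps0) * P_N N p c * f_p N p x.
Proof.
  intros Hz x Hx.
  destruct (classic (exists w, zeta1_set N p U c eps0 w /\ w < x))
    as [(w & (Hw1 & Hw2) & Hwx) | Hnone].
  - split; [lra | apply Hw2; lra].
  - exfalso.
    assert (Hlb : is_lb_Rbar (zeta1_set N p U c eps0) (Finite x)).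
    { intros w Hw. simpl. apply Rnot_lt_le. intros Hwx. apply Hnone. now exists w. }
    pose proof (proj2 (Glb_Rbar_correct (zeta1_set N p U c eps0)) _ Hlb) as Hglb.
    pose proof (Rbar_le_trans _ _ _ Hglb Hz). simpl in *. lra.
Qed.

Lemma P_N_lt_half (N : nat) (p c : R) : c_condition N p c -> P_N N p c < / 2.
Proof.
  unfold c_condition. destruct (N <? 10)%nat; [|auto].
  intros H. assert (0 < E_p N p) by apply exp_pos.
  enough ((1 - E_p N p) / (1 + E_p N p) <= 1) by lra.
  apply Rle_div_l; lra.
Qed.

Section BeyondZeta1.
Variables (N : nat) (p : R) (U : R -> R) (c z M : R) (g1 g2 : R -> R).
Hypotheses (HN : 3 <= INR N) (Hp : 1000 <= p) (Hc : 0 < c < 1) (HM : 0 <= M < 0.55).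
Hypotheses (Hg : forall x, is_derive (eta_tilde N p U) x (g1 x))
  (Hg1 : forall x, is_derive g1 x (g2 x))
  (Hode : forall x, g2 x - 2 * (alpha_p N p / 2) * g1 x + (p - 1) * eta_tilde N p U x =
                    forcing N p U x)
  (Hclose : forall x, z < x -> zeta_tilde N p c <= x /\
                               Rabs (eta_tilde N p U x) <= M * f_p N p x).

Lemma eta_p_near_f (x : R) : z < x ->
  0 < f_p N p x /\ p * f_p N p x <= 1 / 4 /\
  (1 - M) * f_p N p x <= eta_p N p U x <= (1 + M) * f_p N p x.
Proof.
  intros Hx. destruct (Hclose x Hx) as [Hzt Hbound].
  destruct (f_p_beyond_zeta_tilde N p c x HN Hp Hc Hzt) as [Hf HpF].
  apply Rabs_le_between in Hbound. unfold eta_tilde in Hbound.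
  repeat split; lra.
Qed.

Lemma forcing_bounds (x : R) : z < x ->
  - (164 / 100) * p ^ 2 * eta_p N p U x ^ 2 <= forcing N p U x <=
  - (43 / 100) * p ^ 2 * eta_p N p U x ^ 2.
Proof.
  intros Hx. destruct (eta_p_near_f x Hx) as (Hf & HpF & Hy).
  pose proof (D_denom_bounds N p HN Hp).
  replace (forcing N p U x) with
    (phi_p p (eta_p N p U x) + D_denom N p * f_p N p x * eta_p N p U x).
  - apply forcing_value_bounds with (M := M); auto; lra.
  - unfold forcing, f_p. rewrite <- (D_p_mul_denom N p HN Hp). ring.
Qed.

Lemma eta_tilde_nonpos_underdamped : 0 < p - 1 - (alpha_p N p / 2) ^ 2 ->
  forall s, z < s -> eta_tilde N p U s <= 0.
Proof.
  intros Hdisc.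
  pose proof (beta_p_sq N p) as Hb2. rewrite Rabs_pos_eq in Hb2 by lra.
  pose proof (beta_p_pos N p Hdisc) as Hb.
  pose proof (alpha_p_nonneg N p HN Hp). pose proof (m_p_pos N p HN Hp).
  set (T := PI / beta_p N p).
  assert (HT : 0 < T) by (apply Rdiv_lt_0_compat; [apply PI_RGT_0 | lra]).
  apply (ode_underdamped_nonpos (alpha_p N p / 2) (beta_p N p) (p - 1)
           (alpha_p N p / 2 + 2 * m_p N p) (M * D_p N p) z
           (eta_tilde N p U) g1 g2 (forcing N p U));
    [lra | lra | lra | exact Hg | exact Hg1 | exact Hode | |].
  - intros x Hx. fold T.
    destruct (eta_p_near_f x Hx) as (Hf0 & _ & Hy0).
    destruct (eta_p_near_f (x + T) ltac:(lra)) as (Hf1 & _ & Hy1).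
    rewrite Rmult_plus_distr_l, exp_plus, Rmult_assoc.
    apply Rmult_le_compat_l; [apply Rlt_le, exp_pos|].
    apply (underdamped_forcing_shift _ _ (eta_p N p U x) (eta_p N p U (x + T))
             (f_p N p x) (f_p N p (x + T)) (p ^ 2) _ (exp (- 2 * m_p N p * T)) M);
      try apply forcing_bounds; try apply exp_pos; try apply pow_lt; try lra.
    + split; nra.
    + unfold f_p. rewrite (Rmult_assoc (D_p N p)), <- exp_plus. do 2 f_equal. ring.
    + apply (half_period_factor_small N p HN Hp Hdisc).
  - intros x Hx. apply (Rabs_exp_mul_le _ _ (m_p N p)); [ring|].
    apply (Hclose x Hx).
Qed.

Lemma eta_tilde_nonpos_overdamped : p - 1 - (alpha_p N p / 2) ^ 2 <= 0 ->
  forall s, z < s -> eta_tilde N p U s <= 0.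
Proof.
  intros Hdisc.
  pose proof (beta_p_sq N p) as Hb2. rewrite Rabs_left1 in Hb2 by lra.
  assert (Hb : 0 <= beta_p N p) by apply sqrt_pos.
  pose proof (alpha_p_nonneg N p HN Hp). pose proof (m_p_pos N p HN Hp).
  assert (Hba : beta_p N p < alpha_p N p / 2) by nra.
  apply (ode_overdamped_nonpos (alpha_p N p / 2) (beta_p N p) (p - 1)
           (alpha_p N p / 2 - beta_p N p + 2 * m_p N p) (M * D_p N p) z
           (eta_tilde N p U) g1 g2 (forcing N p U));
    [lra | lra | lra | exact Hg | exact Hg1 | exact Hode | |].
  - intros x Hx. pose proof (forcing_bounds x Hx). pose proof (pow2_ge_0 (eta_p N p U x)).
    nra.
  - intros x Hx. apply (Rabs_exp_mul_le _ _ (m_p N p)); [ring|].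
    apply (Hclose x Hx).
Qed.

End BeyondZeta1.

Theorem lemma2p3 (N : nat) (c : R) :
  (3 <= N)%nat ->
  0 < c < 1 ->
  (exists p1 : R, forall p, p1 <= p -> c_condition N p c) ->
  exists e1 : R, 0 < e1 /\
    forall eps0 : R, 0 < eps0 < e1 ->
      exists p0 : R, 0 < p0 /\
        forall (p : R) (U : R -> R),
          p0 <= p ->
          (INR N + 2) / (INR N - 2) < p ->
          is_Ustar N p U ->
          forall z : R, Rbar_le (zeta1_star N p U c eps0) (Finite z) ->
            eta_tilde N p U z <= 0.
Proof.
  intros HN Hc [p1 Hp1].
  exists (1 / 10). split; [lra|]. intros eps0 Heps.
  exists (Rmax p1 1000). split; [pose proof (Rmax_r p1 1000); lra|].
  intros p U Hp _ HU z Hz.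
  assert (HN' : 3 <= INR N) by (apply le_INR in HN; simpl in HN; lra).
  assert (Hp' : 1000 <= p) by (pose proof (Rmax_r p1 1000); lra).
  pose proof (P_N_lt_half N p c (Hp1 p (Rle_trans _ _ _ (Rmax_l p1 1000) Hp))) as HPN.
  destruct (eta_tilde_ode N p HN' Hp' U HU) as (g1 & g2 & Hg & Hg1 & Hode).
  pose proof (zeta1_star_le_bound N p U c eps0 z Hz) as Hclose.
  assert (HM : 0 <= (1 + eps0) * P_N N p c < 0.55).
  { destruct (Hclose (z + 1)) as [Hzt Hbound]; [lra|].
    destruct (f_p_beyond_zeta_tilde N p c (z + 1) HN' Hp' Hc Hzt) as [Hf _].
    exact (tolerance_bounds _ _ _ _ Heps HPN Hf Hbound). }
  apply (nonpos_of_nonpos_right _ z (continuity_pt_of_is_derive _ _ _ (Hg z))).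
  destruct (Rlt_le_dec 0 (p - 1 - (alpha_p N p / 2) ^ 2)) as [Hdisc | Hdisc].
  - exact (eta_tilde_nonpos_underdamped N p U c z _ g1 g2
             HN' Hp' Hc HM Hg Hg1 Hode Hclose Hdisc).
  - exact (eta_tilde_nonpos_overdamped N p U c z _ g1 g2
             HN' Hp' Hc HM Hg Hg1 Hode Hclose Hdisc).
Qed.
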